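(* Let $S$ be a finite $p$-group for an odd prime $p$. Let $\mathfrak{X}_1(S)\leq S$ be the subgroup containing $\mathfrak{X}(S)$ such that $\mathfrak{X}_1(S)/\mathfrak{X}(S)=Z(S/\mathfrak{X}(S))$. Then $J(S)\leq \mathfrak{X}(S)$ if and only if $J(S)\leq \mathfrak{X}_1(S)$.
   Context: For a finite $p$-group $G$ and subgroups $A,B$, write $[A,B;1]=[A,B]$ and $[A,B;k]=[[A,B;k-1],B]$. $\Omega_1(G)$ denotes the subgroup generated by the elements of order $p$ in $G$. The Oliver subgroup $\mathfrak{X}(G)$ of a finite $p$-group $G$ is the unique largest normal subgroup $K$ of $G$ admitting a chain $1=Q_0\leq Q_1\leq\cdots\leq Q_n=K$ of normal subgroups $Q_i\unlhd G$ such that $[\Omega_1(C_G(Q_{i-1})),Q_i;p-1]=1$ for each $1\leq i\leq n$. $J(S)$ is the Thompson subgroup of $S$: the subgroup generated by all elementary abelian $p$-subgroups of $S$ whose rank equals the $p$-rank of $S$ (the largest rank of an elementary abelian $p$-subgroup of $S$). *)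

From mathcomp Require Import all_boot all_fingroup all_solvable.
Set Implicit Arguments.
Unset Strict Implicit.
Unset Printing Implicit Defensive.
Local Open Scope group_scope.

(* Iterated commutator: [A,B;1] = [A,B], [A,B;k] = [[A,B;k-1],B];
   comm_iter A B k = [A,B;k] for k >= 1 (and comm_iter A B 0 = A). *)
Definition comm_iter (gT : finGroupType) (A B : {set gT}) (k : nat) : {set gT} :=
  iter k (fun X => [~: X, B]) A.

Definition oliver_admissible (gT : finGroupType) (p : nat) (G K : {group gT}) : Prop :=
  exists (n : nat) (Q : nat -> {group gT}),
    [/\ Q 0 = 1%G, Q n = K,
        (forall i, i <= n -> Q i <| G),
        (forall i, i < n -> Q i \subset Q i.+1) &
        (forall i, i < n ->
           comm_iter ('Ohm_1('C_G(Q i))) (Q i.+1) p.-1 = 1)].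

Definition is_oliver_subgroup (gT : finGroupType) (p : nat) (G X : {group gT}) : Prop :=
  X <| G /\ oliver_admissible p G X /\
  (forall K : {group gT}, K <| G -> oliver_admissible p G K -> K \subset X).

Definition thompson_subgroup (gT : finGroupType) (p : nat) (G : {set gT}) : {set gT} :=
  <<\bigcup_(E in 'E_p^('r_p(G))(G)) E>>.

From mathcomp Require Import all_boot all_fingroup all_solvable.
Set Implicit Arguments.
Unset Strict Implicit.
Unset Printing Implicit Defensive.
Local Open Scope group_scope.

(* Write C = C_S(X) and V = Omega_1(C).  Maximality of X absorbs every normal
   subgroup Q >= X on which Omega_1(C) acts quadratically, since for p >= 3 such
   a Q can be appended to an admissible chain for X.  Applied to X(C /\ Z), with
   Z/X = Z(S/X), this gives C <= X, so V is an elementary abelian normal subgroup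
   of S centralised by X.  If J(S) <= X_1, every elementary abelian A of maximal
   rank acting quadratically on V lies in X, because XA is then normal in S.
   Thompson replacement does the rest: among the A of maximal rank not in X take
   one with |A /\ V| maximal; it acts non-quadratically on V, and for x in V with
   [x,A,A] <> 1 = [x,A,A,A] the group A* = C_A(B)B, B = <[x,a] | a in A>, again
   has maximal rank and lies outside X, but meets V in more. *)

Section MaxRankElem.

Variables (gT : finGroupType) (p : nat) (S : {group gT}).
Hypothesis p_pr : prime p.

Lemma abelem_joing (A B : {group gT}) :
  p.-abelem A -> p.-abelem B -> B \subset 'C(A) -> p.-abelem (A <*> B).
Proof. by move=> abelA abelB cAB; rewrite (cprod_abelem _ (cprodEY cAB)) abelA. Qed.

Lemma p_rankElem_cent_sub (A U : {group gT}) :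
  A \in 'E_p^('r_p(S))(S) -> U \subset S -> p.-abelem U -> U \subset 'C(A) ->
  U \subset A.
Proof.
move=> EA sUS abelU cAU; have [sAS abelA _] := pnElemP EA.
have /pmaxElemP[_ maxA] := subsetP (p_rankElem_max p S) A EA.
rewrite -(maxA (A <*> U)%G) ?joing_subr ?joing_subl //.
by rewrite inE join_subG sAS sUS abelem_joing.
Qed.

Lemma p_rankElem_card_geq (A E : {group gT}) :
  A \in 'E_p^('r_p(S))(S) -> E \subset S -> p.-abelem E -> #|A| <= #|E| ->
  E \in 'E_p^('r_p(S))(S).
Proof.
move=> EA sES abelE leAE; have [_ abelA rA] := pnElemP EA.
apply/pnElemP; split=> //; apply/eqP; rewrite eqn_leq -{1}(p_rank_abelem abelE).
rewrite p_rankS //= -rA -(leq_exp2l _ _ (prime_gt1 p_pr)).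
by rewrite -(card_pgroup (abelem_pgroup abelE)) -(card_pgroup (abelem_pgroup abelA)).
Qed.

End MaxRankElem.

Section Commutators.

Variable gT : finGroupType.
Implicit Types (B V Y S : {group gT}).

Lemma comm_iter_quadratic (A B : {set gT}) k :
  [~: [~: A, B], B] = 1 -> 1 < k -> comm_iter A B k = 1.
Proof.
move=> quadAB; case: k => [|[|k]] // _.
by elim: k => [|k IHk] //; rewrite /comm_iter iterS -/(comm_iter _ _ _) IHk comm1G.
Qed.

Lemma joing_normal_comm_sub S Y B :
  Y <| S -> B \subset S -> [~: B, S] \subset Y -> Y <*> B <| S.
Proof.
move=> nsYS sBS sBS_Y; have nYS := normal_norm nsYS.
have nYB := subset_trans sBS nYS.
rewrite -(quotientYK nYB) -(quotientGK nsYS) cosetpre_normal sub_center_normal //.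
by rewrite subsetI quotientS // quotient_cents2r.
Qed.

Lemma comm_joingr_sub V Y B :
  V \subset 'C(Y) -> B \subset 'N(Y) -> [~: V, Y <*> B] \subset [~: V, B].
Proof.
move=> cVY nYB; rewrite norm_joinEr // gen_subG.
apply/subsetP=> _ /imset2P[v _ Vv /mulsgP[y b Yy Bb ->] ->].
have /commgP/eqP vy1 : commute v y := centsP cVY v Vv y Yy.
by rewrite commgMJ vy1 conj1g mulg1 mem_commg.
Qed.

Lemma quadratic_joing V Y B :
  V \subset 'C(Y) -> B \subset 'N(Y) ->
  [~: [~: V, B], B] = 1 -> [~: [~: V, Y <*> B], Y <*> B] = 1.
Proof.
move=> cVY nYB quadVB; apply/trivgP; rewrite -quadVB.
have cVBY : [~: V, B] \subset 'C(Y).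
  by rewrite (subset_trans (commSg B cVY)) // commg_subl norms_cent.
apply: subset_trans (commSg _ (comm_joingr_sub cVY nYB)) _.
exact: (comm_joingr_sub (V := [~: V, B]%G)).
Qed.

Lemma comm2_swap_abelian V x a c :
  abelian V -> x \in V -> a \in 'N(V) -> c \in 'N(V) -> commute a c ->
  [~ [~ x, c], a] = [~ [~ x, a], c].
Proof.
move=> abV Vx nVa nVc cac.
have cV u v : u \in V -> v \in V -> commute u v by move=> Vu Vv; apply: (centsP abV).
have [Vxc Vxa] : x ^ c \in V /\ x ^ a \in V by rewrite !memJ_norm.
rewrite !commgEl [(_ * x ^ c) ^ a]conjMg [(_ * x ^ a) ^ c]conjMg !conjVg -!conjgM cac.
move: (x ^ (c * a)) (x ^ c) (x ^ a) Vxc Vxa => z u w Vu Vw.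
rewrite !invMg !invgK !mulgA; congr (_ * z).
by rewrite (cV _ x) ?groupV // -mulgA (cV u^-1) ?groupV // mulgA (cV x) ?groupV.
Qed.

Lemma exists_cubic_comm (S W A : {group gT}) :
  nilpotent S -> A \subset S -> W \subset S -> A \subset 'N(W) ->
  [~: [~: W, A], A] != 1 ->
  exists x a0, [/\ x \in W, a0 \in A, [~ x, a0] \notin 'C(A)
                 & {in A &, forall a b, [~ [~ x, a], b] \in 'C(A)}].
Proof.
move=> nilS sAS; elim: {W}_.+1 {-2}W (ltnSn #|W|) => // n IHn W leWn sWS nWA quadW.
have ntW : W :!=: 1 by apply: contraNneq quadW => ->; rewrite !comm1G.
have ltWA_W : [~: W, A] \proper W by rewrite (nil_comm_properl nilS) ?subsetI ?sAS.
have sWA_W := proper_sub ltWA_W.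
have [cubW | cubicW] := eqVneq [~: [~: [~: W, A], A], A] 1; last first.
  have ltWAn : #|[~: W, A]| < n by apply: leq_trans (proper_card ltWA_W) _.
  have sWAS : [~: W, A] \subset S := subset_trans sWA_W sWS.
  have [x [a0 [WAx]]] := IHn [~: W, A]%G ltWAn sWAS (commg_normr A W) cubicW.
  by exists x, a0; split=> //; apply: (subsetP sWA_W).
have /subsetPn[_ /imset2P[x a0 Wx Aa0 ->] ncxa0] : ~~ (commg_set W A \subset 'C(A)).
  by rewrite -gen_subG; apply: contra quadW => /commG1P->.
have cWAA_A : [~: [~: W, A], A] \subset 'C(A) by apply/commG1P.
by exists x, a0; split=> // a b Aa Ab; rewrite (subsetP cWAA_A) ?mem_commg.
Qed.

End Commutators.

Section Replacement.

Variables (gT : finGroupType) (p : nat) (S V A : {group gT}) (x a0 : gT).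
Hypotheses (p_pr : prime p) (abelV : p.-abelem V) (sVS : V \subset S).
Hypotheses (nVS : S \subset 'N(V)) (EA : A \in 'E_p^('r_p(S))(S)).
Hypotheses (Vx : x \in V) (Aa0 : a0 \in A) (ncxa0 : [~ x, a0] \notin 'C(A)).
Hypothesis cubic_x : {in A &, forall a b, [~ [~ x, a], b] \in 'C(A)}.

Let sAS : A \subset S. Proof. by case/pnElemP: EA. Qed.
Let abelA : p.-abelem A. Proof. by case/pnElemP: EA. Qed.
Let abV : abelian V := abelem_abelian abelV.
Let abA : abelian A := abelem_abelian abelA.
Let nVA : A \subset 'N(V) := subset_trans sAS nVS.

Let C1 := 'C_V(A).
Let B := <<[set [~ x, a] | a in A]>>%G.
Definition replacement_group := ('C_A(B) <*> B)%G.

Let sVA_V : [~: V, A] \subset V. Proof. by rewrite commg_subl. Qed.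

Let comm_xA a : a \in A -> [~ x, a] \in V.
Proof. by move=> Aa; rewrite (subsetP sVA_V) ?mem_commg. Qed.

Let comm2_xA a b : a \in A -> b \in A -> [~ [~ x, a], b] \in C1.
Proof. by move=> Aa Ab; rewrite inE cubic_x // (subsetP sVA_V) ?mem_commg ?comm_xA. Qed.

Let sBV : B \subset V.
Proof. by rewrite gen_subG; apply/subsetP=> _ /imsetP[a Aa ->]; apply: comm_xA. Qed.

Let sAV_C1 : A :&: V \subset C1.
Proof. by rewrite /C1 setIC setIS. Qed.

Let nC1V : V \subset 'N(C1) := sub_abelian_norm abV (subsetIl V _).

Let psi a := coset C1 [~ x, a].

(* [x, ab] = [x, b] [x, a] [x, a, b], and [x, a, b] lies in C_V(A). *)
Let psiM : {in A &, {morph psi : a b / a * b}}.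
Proof.
move=> a b Aa Ab; rewrite /psi commgMJ conjg_mulR mulgA coset_kerr ?comm2_xA //.
rewrite (centsP abV _ (comm_xA Ab) _ (comm_xA Aa)).
by rewrite morphM ?(subsetP nC1V) ?comm_xA.
Qed.

Let psim := Morphism psiM.

Let ker_psi_cent : 'ker psim \subset 'C_A(B).
Proof.
apply/subsetP=> a /morphpreP[Aa /set1P/coset_idr xaC1].
have {xaC1} /setIP[_ cAxa] := xaC1 (subsetP nC1V _ (comm_xA Aa)).
rewrite inE Aa cent_gen; apply/centP=> _ /imsetP[c Ac ->]; apply/commute_sym/commgP.
rewrite (comm2_swap_abelian abV Vx) ?(subsetP nVA) //; last exact: (centsP abA).
by apply/commgP; apply: (centP cAxa).
Qed.

Let index_cent_replacement : #|A : 'C_A(B)| <= #|B : C1|.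
Proof.
have sBC1 : psim @* A \subset B / C1.
  by apply/subsetP=> _ /morphimP[a _ Aa ->]; rewrite mem_quotient ?mem_gen ?imset_f.
rewrite -(card_quotient (subset_trans sBV nC1V)); apply: leq_trans (subset_leq_card sBC1).
by rewrite card_morphim setIid dvdn_leq ?indexgS.
Qed.

Let cBA_C1 : [~: B, A] \subset C1.
Proof.
have nC1A : A \subset 'N(C1) by rewrite normsI ?norms_cent ?normG.
have nC1xA : [set [~ x, a] | a in A] \subset 'N(C1).
  by apply/subsetP=> _ /imsetP[a Aa ->]; rewrite (subsetP nC1V) ?comm_xA.
rewrite -quotient_cents2 ?(subset_trans sBV) // quotient_gen //.
rewrite gen_subG quotient_cents2 // gen_subG.
by apply/subsetP=> _ /imset2P[_ b /imsetP[a Aa ->] Ab ->]; apply: comm2_xA.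
Qed.

Let cCB : B \subset 'C('C_A(B)). Proof. by rewrite centsC subsetIr. Qed.

Lemma card_replacement_geq : #|A| <= #|replacement_group|.
Proof.
have sCB_BC1 : 'C_A(B) :&: B \subset B :&: C1.
  apply/subsetP=> y /setIP[/setIP[Ay _] By].
  by rewrite !inE By (subsetP sBV) // (subsetP abA).
rewrite /= (cent_joinEr cCB) -(leq_pmul2r (cardG_gt0 ('C_A(B) :&: B)%G)) -mul_cardG.
rewrite -(Lagrange (subsetIl A 'C(B))) -(Lagrange (subsetIl B C1)) [#|B : _|]indexgI.
rewrite -mulnA leq_mul2l [X in _ <= X]mulnC; apply/orP; right.
exact: leq_mul index_cent_replacement (subset_leq_card sCB_BC1).
Qed.

Lemma replacement_pnElem : replacement_group \in 'E_p^('r_p(S))(S).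
Proof.
apply: p_rankElem_card_geq EA _ _ card_replacement_geq => //.
  by rewrite join_subG (subset_trans (subsetIl A _)) ?(subset_trans sBV).
by rewrite abelem_joing ?(abelemS (subsetIl A _)) ?(abelemS sBV).
Qed.

Lemma replacement_meetV : #|A :&: V| < #|replacement_group :&: V|.
Proof.
apply: proper_card; apply/properP; split.
  rewrite subsetI subsetIr andbT; apply: subset_trans (joing_subl _ B).
  by rewrite setIS // (subset_trans abV) ?centS.
exists [~ x, a0].
  by rewrite inE comm_xA // andbT (subsetP (joing_subr _ B)) ?mem_gen ?imset_f.
by apply: contra ncxa0 => /(subsetP sAV_C1)/setIP[].
Qed.

Lemma replacement_notin : x \notin replacement_group.
Proof.
apply: contra ncxa0; rewrite /= (cent_joinEr cCB) => /mulsgP[c y /setIP[Ac _] By def_x].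
have Vc : c \in V by rewrite -(mulgK y c) -def_x groupM // groupV (subsetP sBV).
have /setIP[_ cAc] : c \in C1 by rewrite (subsetP sAV_C1) ?inE ?Ac.
have /commgP/eqP ca0 : commute c a0 by apply: (centP cAc).
rewrite def_x commMgJ ca0 conj1g mul1g.
by have /setIP[] := subsetP cBA_C1 _ (mem_commg By Aa0).
Qed.

End Replacement.

Lemma thompson_replacement (gT : finGroupType) p (S V A : {group gT}) :
  prime p -> p.-group S -> p.-abelem V -> V \subset S -> S \subset 'N(V) ->
  A \in 'E_p^('r_p(S))(S) -> [~: [~: V, A], A] != 1 ->
  exists2 A' : {group gT}, A' \in 'E_p^('r_p(S))(S)
    & #|A :&: V| < #|A' :&: V| /\ ~~ (V \subset A').
Proof.
move=> p_pr pS abelV sVS nVS EA quadVA; have [sAS _ _] := pnElemP EA.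
have [x [a0 [Vx Aa0 ncxa0 cubic_x]]] :=
  exists_cubic_comm (pgroup_nil pS) sAS sVS (subset_trans sAS nVS) quadVA.
exists (replacement_group A x); first exact: (replacement_pnElem (V := V)).
split; first exact: replacement_meetV abelV nVS EA Vx Aa0 ncxa0.
have x_notin := replacement_notin abelV nVS EA Vx Aa0 ncxa0 cubic_x.
by apply: contra x_notin => /subsetP; apply.
Qed.

Lemma p_rankElem_sub_of_quadratic (gT : finGroupType) p (S V Y : {group gT}) :
  prime p -> p.-group S -> p.-abelem V -> V \subset S -> S \subset 'N(V) ->
  Y \subset 'C(V) ->
  {in 'E_p^('r_p(S))(S), forall A : {group gT},
     [~: [~: V, A], A] = 1 -> A \subset Y} ->
  {in 'E_p^('r_p(S))(S), forall A : {group gT}, A \subset Y}.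
Proof.
move=> p_pr pS abelV sVS nVS cYV quadY A0 EA0; apply: contraT => nsA0Y.
pose P (A : {group gT}) := (A \in 'E_p^('r_p(S))(S)) && ~~ (A \subset Y).
have PA0 : P A0 by rewrite /P EA0.
have [A /andP[EA nsAY] maxA] := @arg_maxnP _ A0 P (fun A => #|A :&: V|) PA0.
have quadVA : [~: [~: V, A], A] != 1 by apply: contra nsAY => /eqP; apply: quadY.
have [A' EA' [ltAV nsVA']] := thompson_replacement p_pr pS abelV sVS nVS EA quadVA.
have nsA'Y : ~~ (A' \subset Y).
  apply: contra nsVA' => sA'Y; apply: p_rankElem_cent_sub EA' sVS abelV _.
  by rewrite centsC (subset_trans sA'Y).
by have := maxA A'; rewrite /P EA' nsA'Y /= leqNgt ltAV => /(_ isT).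
Qed.

Section OliverSubgroup.

Variables (gT : finGroupType) (p : nat) (S X : {group gT}).
Hypothesis oliverX : is_oliver_subgroup p S X.

Lemma oliver_normal : X <| S.
Proof. by case: oliverX. Qed.

Lemma oliver_subcent_normal : 'C_S(X) <| S.
Proof. by rewrite -{2}(setIidPl (normal_norm oliver_normal)) subcent_normal. Qed.

Lemma oliver_chain_ext_sub (Q : {group gT}) :
  Q <| S -> X \subset Q -> comm_iter 'Ohm_1('C_S(X)) Q p.-1 = 1 -> Q \subset X.
Proof.
have [_ [[n [Q_ [Q0 Qn nsQS sQQ commQ]]] maxX]] := oliverX.
move=> nsQ sXQ commQX; apply: maxX => //.
pose Q' i := if i <= n then Q_ i else Q.
exists n.+1, Q'; rewrite /Q'; split=> [||i _||] //=; rewrite ?ltnn //.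
- by case: leqP => [/nsQS|].
- move=> i; rewrite ltnS; case: ltngtP => // [lt_in | ->] _; rewrite ?Qn //.
  exact: sQQ.
- move=> i; rewrite ltnS; case: ltngtP => // [lt_in | ->] _; rewrite ?Qn //.
  exact: commQ.
Qed.

Hypothesis p_gt2 : 2 < p.

Lemma oliver_sub_quadratic (B : {group gT}) :
  B \subset S -> [~: B, S] \subset X -> [~: [~: 'Ohm_1('C_S(X)), B], B] = 1 ->
  B \subset X.
Proof.
move=> sBS sBS_X quadB; have nsXS := oliver_normal; have nXS := normal_norm nsXS.
apply: subset_trans (joing_subr X B) _.
apply: oliver_chain_ext_sub; rewrite ?joing_subl ?joing_normal_comm_sub //.
apply: comm_iter_quadratic; last by rewrite ltn_predRL.
apply: quadratic_joing quadB; last exact: subset_trans sBS nXS.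
by rewrite (subset_trans (Ohm_sub 1 _)) ?subsetIr.
Qed.

Lemma oliver_cent_sub : p.-group S -> 'C_S(X) \subset X.
Proof.
move=> pS; have nXS := normal_norm oliver_normal.
pose C := 'C_S(X)%G; pose B := (C :&: coset X @*^-1 'Z(S / X))%G.
have sCS : C \subset S := subsetIl S _.
have nsCS : C <| S := oliver_subcent_normal.
have sBX : B \subset X.
  have sBC : B \subset C := subsetIl _ _.
  have cBS : [~: B, S] \subset X.
    rewrite -quotient_cents2 ?(subset_trans sBC) ?(subset_trans sCS) //.
    by rewrite quotient_setIpre subIset // subsetIr orbT.
  apply: (oliver_sub_quadratic (subset_trans sBC sCS) cBS).
  have sWC : 'Ohm_1(C) \subset C := Ohm_sub 1 C.
  have sWB_CX : [~: 'Ohm_1(C), B] \subset C :&: X.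
    rewrite subsetI (subset_trans (commgSS sWC sBC)) ?commg_subl ?normG //=.
    by rewrite commGC (subset_trans _ cBS) ?commgS ?(subset_trans sWC).
  apply/commG1P; apply: subset_trans sWB_CX _; rewrite centsC.
  exact: subset_trans sBC (subset_trans (subsetIr S _) (centS (subsetIr C X))).
apply: contraT => nsCX.
have ntCX : C / X != 1.
  by apply: contra nsCX => /eqP CX1; rewrite -quotient_sub1 ?CX1 ?(subset_trans sCS).
have := meet_center_nil (pgroup_nil (quotient_pgroup X pS)) (quotient_normal X nsCS) ntCX.
by rewrite -quotient_setIpre (quotientS1 sBX) eqxx.
Qed.

End OliverSubgroup.

Unset Implicit Arguments.
Set Strict Implicit.

Theorem corollary1p3 (gT : finGroupType) (p : nat) (S X X1 : {group gT}) :
  prime p -> odd p -> p.-group S ->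
  is_oliver_subgroup p S X ->
  X \subset X1 -> X1 \subset S -> X1 / X = 'Z(S / X) ->
  (thompson_subgroup p S \subset X) <-> (thompson_subgroup p S \subset X1).
Proof.
move=> p_pr p_odd pS oliverX sXX1 sX1S defX1.
have p_gt2 := odd_prime_gt2 p_odd p_pr.
split=> [sJX | sJX1]; first exact: subset_trans sJX sXX1.
have nXS := normal_norm (oliver_normal oliverX).
have cX1S : [~: X1, S] \subset X.
  by rewrite -quotient_cents2 ?(subset_trans sX1S) // defX1 subsetIr.
have sCX := oliver_cent_sub oliverX p_gt2 pS.
pose V := 'Ohm_1('C_S(X)).
have nsVS := char_normal_trans (Ohm_char 1 _) (oliver_subcent_normal oliverX).
have [sVS nVS] := andP nsVS.
have abelV : p.-abelem V.
  rewrite Ohm1_abelem ?(pgroupS (subsetIl S _)) //.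
  by rewrite /abelian (subset_trans (subsetIr S _)) ?centS.
have cXV : X \subset 'C(V) by rewrite centsC (subset_trans (Ohm_sub 1 _)) ?subsetIr.
rewrite /thompson_subgroup gen_subG; apply/bigcupsP.
apply: (p_rankElem_sub_of_quadratic p_pr pS abelV sVS nVS cXV) => A EA quadA.
have [sAS _ _] := pnElemP EA.
have sAX1 : A \subset X1 by rewrite (subset_trans _ sJX1) // sub_gen // (bigcup_sup A).
have cAS : [~: A, S] \subset X := subset_trans (commSg S sAX1) cX1S.
exact (oliver_sub_quadratic oliverX p_gt2 sAS cAS quadA).
Qed.
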